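(* Let $\mathbf c=\{c_n\}_{n=1}^{\infty}$ be a complex $O$-regularly varying quasimonotone sequence with $\lim_{n\to\infty}c_n=0$. Then there exist a natural number $N_0$ and a constant $M>0$ such that $$\sum_{n=m}^{2m}|c_n-c_{n+1}|\le M\max_{m\le n<m+N_0}|c_n|\qquad\text{for all } m=1,2,\dots.$$
   Context: A sequence $\{R(n)\}$ is $O$-regularly varying if it is non-decreasing, positive, and $\limsup_{n\to\infty}R(2n)/R(n)<\infty$. For $\theta\in[0,\pi/2]$, $K(\theta)=\{z\in\mathbb C:|\arg z|\le\theta\}$. A complex sequence $\{c_n\}$ is $O$-regularly varying quasimonotone (in the complex sense) if for some $\theta_0\in[0,\pi/2)$ and some $O$-regularly varying sequence $\{R(n)\}$ one has $\frac{c_n}{R(n)}-\frac{c_{n+1}}{R(n+1)}\in K(\theta_0)$ for all $n$. *)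

From Stdlib Require Import Reals Lra Lia.
From Coquelicot Require Import Coquelicot.
Open Scope R_scope.

(* Sequences are indexed from 1; values at index 0 are irrelevant. *)

Definition O_regularly_varying (Rs : nat -> R) : Prop :=
  (forall n, (1 <= n)%nat -> Rs n <= Rs (S n)) /\
  (forall n, (1 <= n)%nat -> 0 < Rs n) /\
  (exists B N, forall n, (N <= n)%nat -> Rs (2 * n)%nat / Rs n <= B).

(* Sector K(theta) = { z : |arg z| <= theta }, with 0 included. *)
Definition sectorK (theta : R) (z : C) : Prop :=
  exists r phi, 0 <= r /\ Rabs phi <= theta /\
    z = (RtoC r * (RtoC (cos phi) + Ci * RtoC (sin phi)))%C.

Definition O_rv_quasimonotone (c : nat -> C) : Prop :=
  exists (theta0 : R) (Rs : nat -> R),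
    0 <= theta0 < PI / 2 /\ O_regularly_varying Rs /\
    forall n, (1 <= n)%nat ->
      sectorK theta0 (c n / RtoC (Rs n) - c (S n) / RtoC (Rs (S n)))%C.

Definition tends_to_zero (c : nat -> C) : Prop :=
  filterlim c eventually (locally (0 : C)).

Definition var_block (c : nat -> C) (m : nat) : R :=
  sum_n_m (fun n => Cmod (c n - c (S n))%C) m (2 * m).

Fixpoint max_from (c : nat -> C) (m k : nat) : R :=
  match k with
  | O => 0
  | S k' => Rmax (Cmod (c (m + k')%nat)) (max_from c m k')
  end.

(** Put [a_n = c_n / R(n)]. Quasimonotonicity says that every increment
    [a_n - a_(n+1)] lies in the sector [K(theta0)], i.e. in the closed convex
    cone [|z| <= s Re z] with [s = 1 / cos theta0]. Since [a_n -> 0], each [a_n]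
    is a limit of sums of such increments, so it lies in the cone as well; in
    particular [Re a_n] decreases to [0]. Writing
    [c_n - c_(n+1) = R(n) (a_n - a_(n+1)) - (R(n+1) - R(n)) a_(n+1)] gives
    [|c_n - c_(n+1)| <= s (Re c_n - Re c_(n+1) + 2 (R(n+1) - R(n)) Re a_m)]
    for [n >= m], which telescopes over [m <= n <= 2m] to
    [2 s R(2m+1) Re a_m <= 2 s K R(m) Re a_m <= 2 s K |c_m|],
    where [R(2m+1) <= K R(m)] by [O]-regular variation. *)

From Stdlib Require Import Reals Lra Lia.
From Coquelicot Require Import Coquelicot.
Open Scope R_scope.

Lemma re_minus (a b : C) : Re (a - b) = Re a - Re b.
Proof. destruct a, b; simpl; ring. Qed.

Lemma Cmod_scal_l (x : R) (z : C) : 0 <= x -> Cmod (x * z) = x * Cmod z.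
Proof. intros Hx; rewrite Cmod_mult, Cmod_R, Rabs_pos_eq; auto. Qed.

Lemma Cmod_polar (r phi : R) :
  0 <= r -> Cmod (r * (cos phi + Ci * sin phi)) = r.
Proof.
  intros Hr; rewrite Cmod_scal_l by exact Hr.
  replace (Cmod (cos phi + Ci * sin phi)) with 1; [ring|].
  unfold Cmod; transitivity (sqrt 1); [now rewrite sqrt_1 | f_equal; simpl].
  pose proof (sin2_cos2 phi); unfold Rsqr in *; nra.
Qed.

Lemma sectorK_Cmod_le (theta : R) (z : C) :
  0 <= theta < PI / 2 -> sectorK theta z -> cos theta * Cmod z <= Re z.
Proof.
  intros Htheta [r [phi [Hr [Hphi ->]]]].
  rewrite Cmod_polar by exact Hr.
  replace (Re _) with (r * cos phi) by (simpl; ring).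
  assert (Hcos : cos theta <= cos phi).
  { pose proof PI_RGT_0.
    destruct (Rle_lt_dec 0 phi).
    - rewrite Rabs_pos_eq in Hphi by lra.
      apply cos_decr_1; lra.
    - rewrite Rabs_left in Hphi by lra.
      rewrite <- (cos_neg phi); apply cos_decr_1; lra. }
  rewrite Rmult_comm; apply Rmult_le_compat_l; assumption.
Qed.

Lemma incr_from_le (u : nat -> R) (k : nat) :
  (forall n, (k <= n)%nat -> u n <= u (S n)) ->
  forall n p, (k <= n <= p)%nat -> u n <= u p.
Proof.
  intros Hu n p Hnp.
  replace p with (n + (p - n))%nat by lia.
  induction (p - n)%nat as [|j IH].
  - rewrite Nat.add_0_r; apply Rle_refl.
  - rewrite Nat.add_succ_r; apply (Rle_trans _ _ _ IH), Hu; lia.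
Qed.

Lemma sum_n_m_le_telescope (f u : nat -> R) (m p : nat) :
  (m <= p)%nat -> (forall n, (m <= n <= p)%nat -> f n <= u n - u (S n)) ->
  sum_n_m f m p <= u m - u (S p).
Proof.
  intros Hmp Hf; induction Hmp as [|p Hmp IH].
  - rewrite sum_n_n; apply Hf; lia.
  - rewrite sum_n_Sm by lia; change plus with Rplus.
    assert (IH' := IH (fun n Hn => Hf n ltac:(lia))).
    assert (Hp := Hf (S p) ltac:(lia)).
    lra.
Qed.

Lemma O_regularly_varying_le (Rs : nat -> R) :
  O_regularly_varying Rs -> forall n p, (1 <= n <= p)%nat -> Rs n <= Rs p.
Proof. intros [Hincr _]; exact (incr_from_le Rs 1 Hincr). Qed.

Lemma O_regularly_varying_doubling (Rs : nat -> R) :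
  O_regularly_varying Rs ->
  exists B, 0 < B /\ forall n, (1 <= n)%nat -> Rs (2 * n)%nat <= B * Rs n.
Proof.
  intros HRs; pose proof (O_regularly_varying_le Rs HRs) as Hle.
  destruct HRs as [_ [Hpos [B [N HB]]]].
  set (N' := Nat.max N 1).
  assert (H1 : 0 < Rs 1%nat) by (apply Hpos; lia).
  assert (HN' : 0 < Rs (2 * N')%nat) by (apply Hpos; lia).
  (* below [N'] the ratio is controlled by monotonicity alone *)
  set (C0 := Rs (2 * N')%nat / Rs 1%nat).
  assert (HC0 : 0 < C0) by (apply Rdiv_lt_0_compat; assumption).
  exists (Rmax B C0); split; [apply (Rlt_le_trans _ _ _ HC0), Rmax_r|].
  intros n Hn; assert (Hn_pos : 0 < Rs n) by (apply Hpos; lia).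
  destruct (Nat.le_gt_cases N' n) as [Hbig|Hsmall].
  - assert (Hratio := HB n ltac:(lia)).
    apply (Rmult_le_compat_r (Rs n)) in Hratio; [|lra].
    unfold Rdiv in Hratio; rewrite Rmult_assoc, Rinv_l, Rmult_1_r in Hratio by lra.
    apply (Rle_trans _ _ _ Hratio).
    apply Rmult_le_compat_r; [lra | apply Rmax_l].
  - apply Rle_trans with (Rs (2 * N')%nat); [apply Hle; lia|].
    apply Rle_trans with (C0 * Rs n).
    + replace (Rs (2 * N')%nat) with (C0 * Rs 1%nat) by (unfold C0; field; lra).
      apply Rmult_le_compat_l; [lra | apply Hle; lia].
    + apply Rmult_le_compat_r; [lra | apply Rmax_r].
Qed.

Lemma O_regularly_varying_odd_doubling (Rs : nat -> R) :
  O_regularly_varying Rs ->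
  exists K, 0 < K /\ forall m, (1 <= m)%nat -> Rs (S (2 * m)) <= K * Rs m.
Proof.
  intros HRs; pose proof (O_regularly_varying_le Rs HRs) as Hle.
  destruct (O_regularly_varying_doubling Rs HRs) as [B [HB HBn]].
  exists (B * B); split; [nra|].
  intros m Hm.
  apply Rle_trans with (Rs (2 * S m)%nat); [apply Hle; lia|].
  apply (Rle_trans _ _ _ (HBn (S m) ltac:(lia))).
  rewrite Rmult_assoc; apply Rmult_le_compat_l; [lra|].
  apply Rle_trans with (Rs (2 * m)%nat); [apply Hle; lia | apply HBn; lia].
Qed.

Section ScaledSequence.

Variables (s : R) (Rs : nat -> R) (c : nat -> C).
Hypothesis s_pos : 0 < s.
Hypothesis Rs_pos : forall n, (1 <= n)%nat -> 0 < Rs n.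
Hypothesis Rs_incr : forall n, (1 <= n)%nat -> Rs n <= Rs (S n).

Let a (n : nat) : C := (c n / Rs n)%C.

Hypothesis a_step :
  forall n, (1 <= n)%nat -> Cmod (a n - a (S n)) <= s * Re (a n - a (S n)).
Hypothesis c_lim : tends_to_zero c.

Lemma c_eq_scal (n : nat) : (1 <= n)%nat -> c n = (Rs n * a n)%C.
Proof.
  intros Hn; assert (Hpos := Rs_pos n Hn).
  unfold a; field; intros [=]; lra.
Qed.

Lemma Re_a_antitone (n p : nat) : (1 <= n <= p)%nat -> Re (a p) <= Re (a n).
Proof.
  intros Hnp; apply Ropp_le_cancel.
  apply (incr_from_le (fun k => - Re (a k)) 1); [|lia].
  intros k Hk; apply Ropp_le_contravar.
  assert (Hstep := a_step k Hk); rewrite re_minus in Hstep.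
  pose proof (Cmod_ge_0 (a k - a (S k))).
  nra.
Qed.

Lemma Cmod_a_tail_le (n p : nat) :
  (1 <= n)%nat -> Cmod (a n - a (n + p)%nat) <= s * Re (a n - a (n + p)%nat).
Proof.
  intros Hn; induction p as [|p IH].
  - rewrite Nat.add_0_r; replace (a n - a n)%C with (RtoC 0) by ring.
    rewrite Cmod_0, re_RtoC; lra.
  - replace (a n - a (n + S p)%nat)%C
      with ((a n - a (n + p)%nat) + (a (n + p)%nat - a (S (n + p))))%C
      by (rewrite Nat.add_succ_r; ring).
    rewrite re_plus, Rmult_plus_distr_l.
    apply (Rle_trans _ _ _ (Cmod_triangle _ _)), Rplus_le_compat;
      [exact IH | apply a_step; lia].
Qed.

Lemma a_lim (e : R) :
  0 < e -> exists N, forall n, (N <= n)%nat -> Cmod (a n) < e.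
Proof.
  intros He; assert (H1 : 0 < Rs 1%nat) by (apply Rs_pos; lia).
  destruct (proj1 (filterlim_locally_ball_norm c (0 : C)) c_lim
              (mkposreal _ (Rmult_lt_0_compat _ _ He H1))) as [N HN].
  exists (Nat.max N 1); intros n Hn.
  assert (Hcn := HN n ltac:(lia)).
  change (Cmod (c n - 0)%C < e * Rs 1%nat) in Hcn.
  replace (c n - 0)%C with (c n) in Hcn by ring.
  assert (Hn_pos := Rs_pos n ltac:(lia)).
  assert (H1n : Rs 1%nat <= Rs n) by (apply (incr_from_le Rs 1 Rs_incr); lia).
  unfold a; rewrite Cmod_div, Cmod_R, Rabs_pos_eq by (try intros [=]; lra).
  apply Rle_lt_trans with (Cmod (c n) / Rs 1%nat).
  - apply Rmult_le_compat_l; [apply Cmod_ge_0 | apply Rinv_le_contravar; lra].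
  - apply Rmult_lt_reg_r with (Rs 1%nat); [exact H1|].
    unfold Rdiv; rewrite Rmult_assoc, Rinv_l, Rmult_1_r; lra.
Qed.

Lemma Cmod_a_le (n : nat) : (1 <= n)%nat -> Cmod (a n) <= s * Re (a n).
Proof.
  intros Hn; apply Rle_plus_epsilon; intros e He.
  destruct (a_lim (e / (s + 1))) as [N HN]; [apply Rdiv_lt_0_compat; lra|].
  set (p := (n + N)%nat).
  assert (Htail := Cmod_a_tail_le n N Hn); fold p in Htail.
  rewrite re_minus in Htail.
  assert (Hsmall : (s + 1) * Cmod (a p) < e).
  { rewrite Rmult_comm; apply Rlt_div_r; [lra | apply HN; unfold p; lia]. }
  assert (Hre : - Re (a p) <= Cmod (a p)).
  { pose proof (re_le_Cmod (a p)) as Hre; apply Rabs_le_between in Hre; lra. }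
  apply (Rmult_le_compat_l s) in Hre; [|lra].
  replace (Cmod (a n)) with (Cmod ((a n - a p) + a p)) by (f_equal; ring).
  apply (Rle_trans _ _ _ (Cmod_triangle _ _)).
  lra.
Qed.

Lemma Re_a_nonneg (n : nat) : (1 <= n)%nat -> 0 <= Re (a n).
Proof.
  intros Hn; pose proof (Cmod_a_le n Hn); pose proof (Cmod_ge_0 (a n)).
  nra.
Qed.

Lemma Cmod_c_step_le (m n : nat) : (1 <= m <= n)%nat ->
  Cmod (c n - c (S n)) <=
  s * (Re (c n) - Re (c (S n)) + 2 * (Rs (S n) - Rs n) * Re (a m)).
Proof.
  intros Hmn; assert (Hn : (1 <= n)%nat) by lia.
  assert (Hgap : 0 <= Rs (S n) - Rs n) by (pose proof (Rs_incr n Hn); lra).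
  assert (HRn := Rs_pos n Hn).
  rewrite (c_eq_scal n), (c_eq_scal (S n)), !re_scal_l by lia.
  replace (Rs n * a n - Rs (S n) * a (S n))%C
    with (Rs n * (a n - a (S n)) - (Rs (S n) - Rs n)%R * a (S n))%C
    by (rewrite RtoC_minus; ring).
  unfold Cminus at 1; apply (Rle_trans _ _ _ (Cmod_triangle _ _)).
  rewrite Cmod_opp, !Cmod_scal_l by lra.
  assert (Hstep := a_step n Hn); rewrite re_minus in Hstep.
  assert (HaS := Cmod_a_le (S n) ltac:(lia)).
  assert (Hdec := Re_a_antitone m (S n) ltac:(lia)).
  apply (Rmult_le_compat_l (Rs n)) in Hstep; [|lra].
  apply (Rmult_le_compat_l (Rs (S n) - Rs n)) in HaS; [|lra].
  apply (Rmult_le_compat_l (s * (Rs (S n) - Rs n))) in Hdec; [|nra].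
  lra.
Qed.

Lemma var_block_le_Re (m : nat) : (1 <= m)%nat ->
  var_block c m <= 2 * s * Rs (S (2 * m)) * Re (a m).
Proof.
  intros Hm; unfold var_block.
  eapply Rle_trans.
  { apply (sum_n_m_le_telescope _ (fun n => s * (Re (c n) - 2 * Rs n * Re (a m))));
      [lia|].
    intros n Hn; eapply Rle_trans; [apply (Cmod_c_step_le m n); lia | right; ring]. }
  cbv beta; rewrite (c_eq_scal m), (c_eq_scal (S (2 * m))), !re_scal_l by lia.
  assert (Hm_head : 0 <= Rs m * Re (a m))
    by (apply Rmult_le_pos; [apply Rlt_le, Rs_pos | apply Re_a_nonneg]; lia).
  assert (Hm_tail : 0 <= Rs (S (2 * m)) * Re (a (S (2 * m))))
    by (apply Rmult_le_pos; [apply Rlt_le, Rs_pos | apply Re_a_nonneg]; lia).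
  nra.
Qed.

Lemma var_block_le (K : R) (m : nat) : (1 <= m)%nat ->
  Rs (S (2 * m)) <= K * Rs m -> var_block c m <= 2 * s * K * Cmod (c m).
Proof.
  intros Hm HK.
  apply (Rle_trans _ _ _ (var_block_le_Re m Hm)).
  assert (HRm := Rs_pos m Hm).
  assert (Hre : Rs m * Re (a m) <= Cmod (c m)).
  { rewrite (c_eq_scal m Hm), <- re_scal_l, <- (c_eq_scal m Hm).
    apply (Rle_trans _ _ _ (Rle_abs _)), re_le_Cmod. }
  assert (Ham := Re_a_nonneg m Hm).
  assert (HK_pos : 0 < K) by (pose proof (Rs_pos (S (2 * m)) ltac:(lia)); nra).
  apply (Rmult_le_compat_r (Re (a m))) in HK; [|lra].
  apply (Rmult_le_compat_l (2 * s * K)) in Hre; [|nra].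
  nra.
Qed.

End ScaledSequence.

Theorem mainTheorem5 (c : nat -> C) :
  O_rv_quasimonotone c -> tends_to_zero c ->
  exists (N0 : nat) (M : R), (1 <= N0)%nat /\ 0 < M /\
    forall m : nat, (1 <= m)%nat ->
      var_block c m <= M * max_from c m N0.
Proof.
  intros [theta [Rs [Htheta [HRs Hsector]]]] Hlim.
  assert (Hcos : 0 < cos theta) by (apply cos_gt_0; pose proof PI_RGT_0; lra).
  destruct (O_regularly_varying_odd_doubling Rs HRs) as [K [HK HRsK]].
  destruct HRs as [Hincr [Hpos _]].
  assert (Hstep : forall n, (1 <= n)%nat ->
    Cmod (c n / Rs n - c (S n) / Rs (S n)) <=
    / cos theta * Re (c n / Rs n - c (S n) / Rs (S n))).
  { intros n Hn; apply (Rmult_le_reg_l (cos theta)); [exact Hcos|].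
    rewrite <- Rmult_assoc, Rinv_r, Rmult_1_l by lra.
    exact (sectorK_Cmod_le theta _ Htheta (Hsector n Hn)). }
  exists 1%nat, (2 * / cos theta * K); repeat split.
  - apply Nat.le_refl.
  - pose proof (Rinv_0_lt_compat _ Hcos); nra.
  - intros m Hm; simpl max_from; rewrite Nat.add_0_r.
    apply (Rle_trans _ _ _
      (var_block_le (/ cos theta) Rs c (Rinv_0_lt_compat _ Hcos) Hpos Hincr
         Hstep Hlim K m Hm (HRsK m Hm))).
    apply Rmult_le_compat_l, Rmax_l.
    pose proof (Rinv_0_lt_compat _ Hcos); nra.
Qed.
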